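(* Let $\Pi$ be a protocol on a memory set $M$ with $|M|=m$, having $n>2$ absorbing memory states, and let $\sigma\in\mathrm{br}(\Pi)$. Then there exists a protocol $\Pi'$ on some $M'\subset M$ with $|M'|=m-1$, having $n-1$ absorbing memory states, such that $U^R(\Pi)=U^R(\Pi')$ and the restriction of $\sigma$ to $M'\times\Theta$ is a best response to $\Pi'$.
   Context: Setting. The state of nature is $\theta\in\Theta=\{H,L\}$ with prior $\Pr(\theta=H)=p\in(0,1)$. A sender privately observes $\theta$; a receiver does not. $S$ is a finite signal set; conditional on $\theta$, signals are i.i.d. with distribution $\pi_\theta$ on $S$, where $\pi_\theta(s)>0$ for all $s\in S,\theta\in\Theta$, and $\pi_H\neq\pi_L$. The receiver has a finite set of memory states $M$ and chooses a protocol $\Pi=(f,g,a)$: a transition function $f:M\times S\to\Delta(M)$ ($f(i,s)(j)$ is the probability of moving from memory state $i$ to $j$ after signal $s$), an initial distribution $g\in\Delta(M)$ of $m_0$, and an action rule $a:M\to[0,1]$ (probability of action $H$ if the game ends in that memory state). A sender strategy is $\sigma:M\times\Theta\to[0,1]$, the probability of stopping in the current memory state given $\theta$. Timing: $m_0\sim g$; in each period $t=0,1,\dots$, with current memory state $m_t$, the game ends if $m_t$ is absorbing ($f(m_t,s)(m_t)=1$ for all $s$); otherwise the sender stops with probability $\sigma(m_t,\theta)$, ending the game; if not stopped, a signal $s_t\sim\pi_\theta$ is generated and $m_{t+1}\sim f(m_t,s_t)$. When the game ends in state $m_t$ the receiver takes action $H$ with probability $a(m_t)$ and $L$ otherwise.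 The receiver's payoff is $1$ if the action equals $\theta$ and $0$ otherwise; the sender's payoff is $1$ if the action is $H$ and $0$ otherwise; there is no discounting; if the game never ends both get $0$. $U^S(\Pi,\sigma),U^R(\Pi,\sigma)$ denote expected payoffs, $\mathrm{br}(\Pi)=\arg\sup_\sigma U^S(\Pi,\sigma)$ is the set of sender best responses, and $U^R(\Pi):=U^R(\Pi,\sigma)$ for $\sigma\in\mathrm{br}(\Pi)$. Since $\pi_\theta$ has full support, which transitions $i\to j$ have positive probability does not depend on $\theta$; the terms absorbing, transient, recurrent communicating class applied to $\Pi$ refer to the Markov chain on $M$ induced by $f$ with signals drawn from $\pi_\theta$ (sender never stopping), and mean the same for both $\theta$. *)

From HB Require Import structures.
From mathcomp Require Import all_boot all_order all_algebra.
From mathcomp Require Import all_classical all_reals all_analysis.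
Set Implicit Arguments. Unset Strict Implicit. Unset Printing Implicit Defensive.
Import Order.TTheory GRing.Theory Num.Theory.
Local Open Scope ring_scope.
Local Open Scope classical_set_scope.

Inductive Theta := TH | TL.

Section Game.
Variable R : realType.
Variable S : finType.

Definition is_dist (M : finType) (d : M -> R) : Prop :=
  (forall i, 0 <= d i) /\ \sum_i d i = 1.

Definition wf_signals (pi : Theta -> S -> R) : Prop :=
  (forall th s, 0 < pi th s) /\ (forall th, \sum_s pi th s = 1) /\ pi TH <> pi TL.

(* protocol (f, g, a) on the memory set M:
   trans i s j = f(i,s)(j), init j = g(j), act i = a(i) *)
Record protocol (M : finType) := Protocol {
  trans : M -> S -> M -> R;
  init : M -> R;
  act : M -> R }.

Definition wf_protocol (M : finType) (P : protocol M) : Prop :=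
  (forall i s, is_dist (trans P i s)) /\ is_dist (init P) /\
  (forall i, 0 <= act P i <= 1).

Definition absorbing (M : finType) (P : protocol M) (i : M) : bool :=
  [forall s, trans P i s i == 1].

(* sender strategy sigma i th = probability of stopping in state i given th *)
Definition wf_strategy (M : finType) (sigma : M -> Theta -> R) : Prop :=
  forall i th, 0 <= sigma i th <= 1.

(* Expected terminal reward r(m_end), counting only games that end within the
   first t periods (periods 0..t-1), starting from memory state i, given th. *)
Fixpoint payoff_upto (M : finType) (P : protocol M) (pi : Theta -> S -> R)
    (sigma : M -> Theta -> R) (th : Theta) (r : M -> R) (t : nat) (i : M) : R :=
  match t with
  | 0 => 0
  | t'.+1 =>
      if absorbing P i then r i
      else sigma i th * r i +
           (1 - sigma i th) *
             \sum_s (pi th s * \sum_j (trans P i s j *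
                        payoff_upto P pi sigma th r t' j))
  end.

(* Expected terminal reward (0 if the game never ends): the limit (= supremum,
   the sequence being nondecreasing and bounded) of the finite-horizon values,
   starting from m_0 ~ g. *)
Definition exp_reward (M : finType) (P : protocol M) (pi : Theta -> S -> R)
    (sigma : M -> Theta -> R) (th : Theta) (r : M -> R) : R :=
  sup (range (fun t : nat => \sum_i init P i * payoff_upto P pi sigma th r t i)).

(* Sender: payoff 1 iff action H. *)
Definition US (M : finType) (pi : Theta -> S -> R) (p : R) (P : protocol M)
    (sigma : M -> Theta -> R) : R :=
  p * exp_reward P pi sigma TH (act P) + (1 - p) * exp_reward P pi sigma TL (act P).

(* Receiver: payoff 1 iff action = state. *)
Definition UR (M : finType) (pi : Theta -> S -> R) (p : R) (P : protocol M)
    (sigma : M -> Theta -> R) : R :=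
  p * exp_reward P pi sigma TH (act P) +
  (1 - p) * exp_reward P pi sigma TL (fun i => 1 - act P i).

Definition best_response (M : finType) (pi : Theta -> S -> R) (p : R)
    (P : protocol M) (sigma : M -> Theta -> R) : Prop :=
  wf_strategy sigma /\
  forall tau, wf_strategy tau -> US pi p P tau <= US pi p P sigma.

End Game.

From HB Require Import structures.
From mathcomp Require Import all_boot all_order all_algebra.
From mathcomp Require Import all_classical all_reals all_analysis.
From mathcomp Require Import ring lra zify.
Set Implicit Arguments.
Unset Strict Implicit.
Unset Printing Implicit Defensive.
Import Order.TTheory GRing.Theory Num.Theory.
Local Open Scope ring_scope.

(* Among three or more absorbing states pick one, j, whose action lies between
   the actions of two others, i and k: a(j) = l a(i) + (1 - l) a(k).  Delete j
   and send all probability that went to j (initially or by a transition) to i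
   with weight l and to k with weight 1 - l.  Since play stops on entering an
   absorbing state, the finite-horizon payoff of every sender strategy is
   unchanged for every terminal reward r with r(j) = l r(i) + (1 - l) r(k),
   in particular for r = a and r = 1 - a.  Hence U^S and U^R agree on the two
   protocols for all strategies simultaneously, and best responses persist. *)

Lemma exists_between (T : finType) (d : Order.disp_t) (O : orderType d)
    (A : {set T}) (f : T -> O) :
  (2 < #|A|)%N ->
  exists j i k,
    [/\ [&& j \in A, i \in A & k \in A], i != j, k != j & (f k <= f j <= f i)%O].
Proof.
move=> A3; have [a aA] : exists a, a \in A by apply/card_gt0P; lia.
case: (@arg_maxP _ _ _ a (fun x => x \in A) f aA) => i iA fi.
case: (@arg_minP _ _ _ a (fun x => x \in A) f aA) => k kA fk.
have : (0 < #|A :\ i :\ k|)%N.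
  have := cardsD1 i A; have := cardsD1 k (A :\ i); rewrite inE iA !inE kA andbT.
  by case: (k != i) => /=; lia.
case/card_gt0P => j; rewrite !inE => /and3P[jk ji jA].
exists j, i, k; split; rewrite ?jA ?iA ?kA 1?eq_sym //.
by apply/andP; split; [exact: fk | exact: fi].
Qed.

Lemma convex_combination_between (R : realFieldType) (lo x hi : R) : lo <= x <= hi ->
  exists2 l, 0 <= l <= 1 & x = l * hi + (1 - l) * lo.
Proof.
move=> /andP[lox xhi]; have [hilo|hilo] := eqVneq hi lo.
  by exists 1; rewrite ?ler01 ?lexx //; move: xhi; rewrite hilo => xlo; lra.
have hilo_gt0 : 0 < hi - lo by rewrite subr_gt0 lt_neqAle eq_sym hilo (le_trans lox xhi).
exists ((x - lo) / (hi - lo)); last by field; rewrite gt_eqF.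
by rewrite divr_ge0 ?ler_pdivrMr ?mul1r; lra.
Qed.

Lemma is_dist_eq0 (R : realType) (M : finType) (d : M -> R) (x y : M) :
  is_dist d -> d x = 1 -> y != x -> d y = 0.
Proof.
move=> [d_ge0 d_sum] dx1 yx.
have : \sum_(z | z != x) d z = 0 by move: d_sum; rewrite (bigD1 x) //= dx1; lra.
by move/psumr_eq0P => -> // z _; exact: d_ge0.
Qed.

Lemma absorbing_trans_eq0 (R : realType) (S M : finType) (P : protocol R S M)
    (x y : M) (s : S) :
  wf_protocol P -> absorbing P x -> y != x -> trans P x s y = 0.
Proof. by move=> [trans_dist _] /forallP/(_ s)/eqP; apply: is_dist_eq0. Qed.

Lemma payoff_upto_absorbing (R : realType) (S M : finType) (P : protocol R S M)
    pi sigma th (r : M -> R) (t : nat) (x : M) :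
  absorbing P x -> payoff_upto P pi sigma th r t x = if t is _.+1 then r x else 0.
Proof. by case: t => [|t] //= ->. Qed.

Section MergeAbsorbingState.
Variables (R : realType) (M : finType) (j i k : M) (l : R).
Hypotheses (ij : i != j) (kj : k != j).

Local Notation M' := {x : M | x \in [set~ j]}.

Definition merge (w : M -> R) (y : M') : R :=
  w (val y) + ((val y == i)%:R * l + (val y == k)%:R * (1 - l)) * w j.

Lemma sum_merge (w F : M -> R) : F j = l * F i + (1 - l) * F k ->
  \sum_y merge w y * F (val y) = \sum_x w x * F x.
Proof.
move=> Fj; rewrite /merge -(big_sub [set~ j] (fun x =>
  (w x + ((x == i)%:R * l + (x == k)%:R * (1 - l)) * w j) * F x)).
rewrite [RHS](bigD1 j) //=.
rewrite [X in _ = _ + X](eq_bigl [in [set~ j]]) => [|x]; last by rewrite !inE.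
have point u a : u \in [set~ j] ->
    \sum_(x in [set~ j]) (x == u)%:R * a * w j * F x = a * w j * F u.
  move=> uj; rewrite (bigD1 u) //= eqxx mul1r big1 ?addr0 // => x /andP[_ /negbTE->].
  by rewrite !mul0r.
under eq_bigr do rewrite !mulrDl.
rewrite !big_split /= !point ?inE // Fj; lra.
Qed.

Lemma merge_dist (w : M -> R) : 0 <= l <= 1 -> is_dist w -> is_dist (merge w).
Proof.
move=> /andP[l_ge0 l_le1] [w_ge0 w_sum]; split=> [y|].
  by rewrite /merge addr_ge0 ?mulr_ge0 ?addr_ge0 ?mulr_ge0 ?ler0n ?subr_ge0.
transitivity (\sum_y merge w y * 1); first by apply: eq_bigr => y _; rewrite mulr1.
rewrite (@sum_merge w (fun=> 1)); last by rewrite /=; ring.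
by under eq_bigr do rewrite mulr1.
Qed.

Variables (S : finType) (P : protocol R S M).

Definition merge_protocol : protocol R S M' :=
  Protocol (fun y s => merge (trans P (val y) s)) (merge (init P)) (fun y => act P (val y)).

Hypotheses (wfP : wf_protocol P) (absi : absorbing P i) (absk : absorbing P k).

Lemma wf_merge_protocol : 0 <= l <= 1 -> wf_protocol merge_protocol.
Proof.
move=> l01; have [trans_dist [init_dist act01]] := wfP.
by split=> [y s|]; [|split=> [|y]]; [exact: merge_dist|exact: merge_dist|exact: act01].
Qed.

Lemma merge_id (w : M -> R) y :
  w j = 0 \/ (val y != i) && (val y != k) -> merge w y = w (val y).
Proof.
by rewrite /merge => -[->|/andP[/negbTE-> /negbTE->]]; rewrite ?mulr0 ?(mul0r, add0r) addr0.
Qed.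

Lemma absorbing_merge y : absorbing merge_protocol y = absorbing P (val y).
Proof.
apply: eq_forallb => s; rewrite /= merge_id //.
have [/orP ik|] := boolP ((val y == i) || (val y == k)); last by rewrite negb_or; right.
left; apply: absorbing_trans_eq0 => //; first by case: ik => /eqP->.
by have := valP y; rewrite !inE eq_sym.
Qed.

Hypothesis absj : absorbing P j.

Section Payoffs.
Variables (pi : Theta -> S -> R) (tau : M -> Theta -> R) (th : Theta) (r : M -> R).
Hypothesis r_j : r j = l * r i + (1 - l) * r k.

Lemma payoff_upto_merged_state t :
  payoff_upto P pi tau th r t j =
  l * payoff_upto P pi tau th r t i + (1 - l) * payoff_upto P pi tau th r t k.
Proof. by rewrite !payoff_upto_absorbing //; case: t => [|t] //; rewrite !mulr0 addr0. Qed.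

Lemma payoff_upto_merge t y :
  payoff_upto merge_protocol pi (fun y th => tau (val y) th) th (fun y => r (val y)) t y =
  payoff_upto P pi tau th r t (val y).
Proof.
elim: t y => [|t IH] y //=; rewrite absorbing_merge; case: absorbing => //.
congr (_ + _ * _); apply: eq_bigr => s _; congr (_ * _).
under eq_bigr do rewrite IH.
by rewrite (sum_merge _ (payoff_upto_merged_state t)).
Qed.

Lemma exp_reward_merge :
  exp_reward merge_protocol pi (fun y th => tau (val y) th) th (fun y => r (val y)) =
  exp_reward P pi tau th r.
Proof.
rewrite /exp_reward; do 2 f_equal; apply: funext => t.
under eq_bigr do rewrite payoff_upto_merge.
by rewrite (sum_merge _ (payoff_upto_merged_state t)).
Qed.

End Payoffs.

Lemma card_absorbing_merge :
  #|[set y | absorbing merge_protocol y]| = (#|[set x | absorbing P x]| - 1)%N.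
Proof.
have -> : [set y | absorbing merge_protocol y] = [set y : M' | absorbing P (val y)].
  by apply: eq_finset => y; rewrite absorbing_merge.
rewrite -(card_imset _ val_inj) (cardsD1 j [set x | absorbing P x]) inE absj addKn.
apply: eq_card => x; rewrite !inE; apply/imsetP/andP => [[y]|[xj absx]].
  by rewrite inE => absy ->; split=> //; rewrite -in_setC1; exact: valP.
have xM' : x \in [set~ j] by rewrite in_setC1.
by exists (exist _ x xM'); rewrite ?inE.
Qed.

Hypothesis act_j : act P j = l * act P i + (1 - l) * act P k.

Lemma US_merge pi p (tau : M -> Theta -> R) :
  US pi p merge_protocol (fun y th => tau (val y) th) = US pi p P tau.
Proof. by rewrite /US !exp_reward_merge. Qed.

Lemma UR_merge pi p (tau : M -> Theta -> R) :
  UR pi p merge_protocol (fun y th => tau (val y) th) = UR pi p P tau.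
Proof.
have act_j' : 1 - act P j = l * (1 - act P i) + (1 - l) * (1 - act P k).
  by rewrite act_j; ring.
by rewrite /UR (exp_reward_merge _ _ _ act_j) -(exp_reward_merge _ _ _ act_j').
Qed.

Lemma best_response_merge pi p sigma : best_response pi p P sigma ->
  best_response pi p merge_protocol (fun y th => sigma (val y) th).
Proof.
move=> [sigma_wf sigma_best]; split=> [y th|tau' tau'_wf]; first exact: sigma_wf.
(* The value of the extension at the absorbing state [j] is never consulted. *)
pose tau x th := oapp (fun y => tau' y th) 0 (insub x : option M').
have -> : tau' = fun y th => tau (val y) th.
  by apply: funext => y; apply: funext => th; rewrite /tau valK.
rewrite !US_merge; apply: sigma_best => x th; rewrite /tau.
by case: insub => [y|] /=; [exact: tau'_wf | rewrite lexx ler01].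
Qed.

End MergeAbsorbingState.

Theorem mainTheorem20 (R : realType) (S : finType) (pi : Theta -> S -> R) (p : R)
    (M : finType) (P : protocol R S M) (m n : nat) (sigma : M -> Theta -> R) :
  wf_signals pi -> 0 < p < 1 -> wf_protocol P ->
  #|M| = m -> #|[set i | absorbing P i]| = n -> (2 < n)%N ->
  best_response pi p P sigma ->
  exists (M' : {set M}) (P' : protocol R S {x : M | x \in M'}),
    [/\ #|M'| = (m - 1)%N, wf_protocol P',
        #|[set i | absorbing P' i]| = (n - 1)%N,
        UR pi p P sigma = UR pi p P' (fun x th => sigma (val x) th)
      & best_response pi p P' (fun x th => sigma (val x) th)].
Proof.
move=> _ _ wfP cardM cardA n_gt2 br.
rewrite -cardA in n_gt2.
have [j [i [k [/and3P[absj absi absk] ij kj act_jik]]]] := exists_between (act P) n_gt2.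
rewrite !inE in absj absi absk.
have [l l01 act_j] := convex_combination_between act_jik.
exists [set~ j], (merge_protocol j i k l P); split.
- by rewrite cardsC1 cardM subn1.
- exact: wf_merge_protocol.
- by rewrite card_absorbing_merge // cardA.
- by rewrite UR_merge.
- exact: best_response_merge.
Qed.
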